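(* Let $0<p<1$ and $\alpha>-1$, and consider the urn transfer process described in the context (the $p_k$-model), assumed well defined, i.e. $0\le p_{k+1}\le 1$ at every stage. Let $B(k)=\sum_{i\ge 1}F_i(k)$ be the total number of balls after $k$ steps. Then for every integer $k>1$, $$E(B(k)) = E\Big(\sum_{i=1}^k F_i(k)\Big) = 1+(k-1)p \quad\text{and}\quad E(p_k)=p.$$
   Context: Urn transfer model ($p_k$-model). There are countably many urns $urn_1,urn_2,\dots$; each ball in $urn_i$ carries $i$ pins. Let $F_i(k)$ be the number of balls in $urn_i$ after $k$ steps. Initially (stage $k=1$) $F_1(1)=1$ and $F_i(1)=0$ for $i>1$. Fix parameters $0<p<1$ and $\alpha>-1$. At stage $k+1$ ($k\ge1$) one of two things happens: (i) with probability $$p_{k+1}=1-\frac{(1-p)\sum_{i=1}^k (i+\alpha)F_i(k)}{k(1+\alpha p)+\alpha(1-p)},$$ a new ball (with one pin) is added to $urn_1$; (ii) with probability $1-p_{k+1}$, an urn is selected, $urn_i$ being chosen with probability $\frac{(1-p)(i+\alpha)F_i(k)}{k(1+\alpha p)+\alpha(1-p)}$ for $1\le i\le k$, and one ball of $urn_i$ is moved to $urn_{i+1}$ (i.e. receives an extra pin). The process is only defined when $0\le p_{k+1}\le1$ at each stage. The total number of pins after $k$ steps is $\sum_i iF_i(k)=k$, and $F_i(k)=0$ for $i>k$. $E$ denotes expectation over the randomness of the process. *)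

From mathcomp Require Import all_boot all_order all_algebra.
Set Implicit Arguments. Unset Strict Implicit. Unset Printing Implicit Defensive.
Import Order.TTheory GRing.Theory Num.Theory.
Local Open Scope ring_scope.

Section Urn.
Variable R : realFieldType.
Variables (p alpha : R).

(* A configuration is a list s of nats; the number of balls in urn_i (i >= 1)
   is F s i = nth 0 s (i-1).  All urns beyond the list are empty. *)
Definition F (s : seq nat) (i : nat) : nat := nth 0%N s i.-1.

Definition B (s : seq nat) : nat := sumn s.

Definition denom (k : nat) : R := k%:R * (1 + alpha * p) + alpha * (1 - p).

(* p_{k+1}, computed from the configuration s after k steps *)
Definition pnext (k : nat) (s : seq nat) : R :=
  1 - (1 - p) * (\sum_(1 <= i < k.+1) (i%:R + alpha) * (F s i)%:R) / denom k.

Definition qsel (k : nat) (s : seq nat) (i : nat) : R :=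
  (1 - p) * (i%:R + alpha) * (F s i)%:R / denom k.

Definition add_ball (s : seq nat) : seq nat := incr_nth s 0.

Definition move_ball (s : seq nat) (i : nat) : seq nat :=
  incr_nth (set_nth 0%N s i.-1 (nth 0%N s i.-1).-1) i.

Definition step (k : nat) (x : R * seq nat) : seq (R * seq nat) :=
  (x.1 * pnext k x.2, add_ball x.2)
    :: [seq (x.1 * qsel k x.2 i, move_ball x.2 i) | i <- iota 1 k].

(* law of the configuration after k steps (k >= 1), as a list of
   (probability, configuration) pairs; stage 1: F_1(1) = 1, others 0 *)
Fixpoint law (k : nat) : seq (R * seq nat) :=
  match k with
  | 0 => [:: (1, [:: 1%N])]
  | 1 => [:: (1, [:: 1%N])]
  | k'.+1 => flatten [seq step k' x | x <- law k']
  end.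

Definition Exp (k : nat) (f : seq nat -> R) : R :=
  \sum_(x <- law k) x.1 * f x.2.

Definition well_defined : Prop :=
  forall k : nat, (1 <= k)%N -> forall x, x \in law k -> 0 < x.1 ->
    0 <= pnext k x.2 <= 1.

End Urn.

From mathcomp Require Import all_boot all_order all_algebra.
From mathcomp Require Import zify ring lra.
Import Order.TTheory GRing.Theory Num.Theory.
Local Open Scope ring_scope.

(* After k steps every reachable configuration carries exactly k pins,
   sum_i i F_i(k) = k, so p_(k+1) is an affine function of the ball count:
   p_(k+1) = 1 - (1 - p) (k + alpha B(k)) / (k (1 + alpha p) + alpha (1 - p)).
   A ball is created exactly in case (i), so E B(k+1) = E B(k) + E p_(k+1).
   If E B(k) = 1 + (k - 1) p, the expected numerator k + alpha E B(k) equals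
   the denominator, hence E p_(k+1) = p and E B(k+1) = 1 + k p. *)

Fixpoint wsumn (n : nat) (s : seq nat) : nat :=
  if s is x :: s' then (n * x + wsumn n.+1 s')%N else 0%N.

Lemma wsumn_incr_nth n s i : wsumn n (incr_nth s i) = (wsumn n s + (n + i))%N.
Proof.
elim: s n i => [|x s IH] n [|i] //=; try lia.
- have ncons_1 m j : wsumn m (ncons j 0%N [:: 1%N]) = (m + j)%N.
    by elim: j m => [|j IHj] m /=; rewrite ?IHj; lia.
  by rewrite ncons_1; lia.
- by rewrite IH; lia.
Qed.

Lemma wsumn_set_nth_add n {s i} x : (i < size s)%N ->
  (wsumn n (set_nth 0%N s i x) + (n + i) * nth 0%N s i =
   wsumn n s + (n + i) * x)%N.
Proof.
elim: s n i => [|y s IH] n [|i] //= lt_i; first by lia.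
by have := IH n.+1 i lt_i; lia.
Qed.

Lemma sumn_set_nth_add {s i} x : (i < size s)%N ->
  (sumn (set_nth 0%N s i x) + nth 0%N s i = sumn s + x)%N.
Proof.
elim: s i => [|y s IH] [|i] //= lt_i; first by lia.
by have := IH i lt_i; lia.
Qed.

Lemma sumn_incr_nth s i : sumn (incr_nth s i) = (sumn s).+1.
Proof.
elim: s i => [|x s IH] [|i] //=; last by rewrite IH addnS.
by rewrite sumn_ncons.
Qed.

Lemma sumn_window s N : (size s <= N)%N ->
  (\sum_(0 <= j < N) nth 0%N s j)%N = sumn s.
Proof.
elim: s N => [|x s IH] N le_sN.
  by rewrite big1 // => j _; rewrite nth_nil.
case: N le_sN => // N le_sN.
by rewrite big_nat_recl //= IH.
Qed.

Lemma wsumn_window n {s N} : (size s <= N)%N ->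
  (\sum_(0 <= j < N) (n + j) * nth 0%N s j)%N = wsumn n s.
Proof.
elim: s n N => [|x s IH] n N le_sN.
  by rewrite big1 // => j _; rewrite nth_nil muln0.
case: N le_sN => // N le_sN.
rewrite big_nat_recl //= addn0 -(IH n.+1 N le_sN).
by congr (_ + _)%N; apply: eq_bigr => j _; rewrite addSnnS.
Qed.

Definition pins (s : seq nat) : nat := wsumn 1 s.

Lemma sum_F_window {s N} : (size s <= N)%N -> (\sum_(1 <= i < N.+1) F s i)%N = B s.
Proof. by move=> le_sN; rewrite big_add1 /= sumn_window. Qed.

Lemma sum_pins_window {s N} : (size s <= N)%N ->
  (\sum_(1 <= i < N.+1) i * F s i)%N = pins s.
Proof. by move=> le_sN; rewrite big_add1 /pins -(wsumn_window 1 le_sN). Qed.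

Lemma B_add_ball s : B (add_ball s) = (B s).+1.
Proof. exact: sumn_incr_nth. Qed.

Lemma pins_add_ball s : pins (add_ball s) = (pins s).+1.
Proof. by rewrite /pins wsumn_incr_nth addn1. Qed.

Lemma F_gt0_size {s i} : (0 < F s i)%N -> (i.-1 < size s)%N.
Proof. by apply: contraTT; rewrite -leqNgt /F => /(nth_default 0%N) ->. Qed.

Lemma B_move_ball s i : (0 < F s i)%N -> B (move_ball s i) = B s.
Proof.
move=> F_gt0; have := sumn_set_nth_add (nth 0%N s i.-1).-1 (F_gt0_size F_gt0).
by rewrite /B /move_ball sumn_incr_nth; move: F_gt0; rewrite /F; lia.
Qed.

Lemma pins_move_ball s i : (0 < i)%N -> (0 < F s i)%N ->
  pins (move_ball s i) = (pins s).+1.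
Proof.
move=> i_gt0 F_gt0; have := wsumn_set_nth_add 1 (nth 0%N s i.-1).-1 (F_gt0_size F_gt0).
rewrite /pins /move_ball wsumn_incr_nth; move: F_gt0; rewrite /F.
by case: i i_gt0 => // i _ /=; case: (nth 0%N s i) => // m _; nia.
Qed.

Lemma size_add_ball s k : (size s <= k)%N -> (size (add_ball s) <= k.+1)%N.
Proof. by rewrite /add_ball size_incr_nth; case: ifP => //; lia. Qed.

Lemma size_move_ball s i k : (size s <= k)%N -> (i <= k)%N ->
  (size (move_ball s i) <= k.+1)%N.
Proof.
by rewrite /move_ball size_incr_nth size_set_nth; case: ifP => _; lia.
Qed.

Section Expectation.
Context {R : realFieldType} {p alpha : R}.

Local Notation law := (law p alpha).
Local Notation Exp := (Exp p alpha).
Local Notation pnext := (pnext p alpha).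
Local Notation qsel := (qsel p alpha).
Local Notation denom := (denom p alpha).

Lemma law_succ k : (0 < k)%N ->
  law k.+1 = flatten [seq step p alpha k x | x <- law k].
Proof. by case: k. Qed.

Lemma Exp_succ k f : (0 < k)%N ->
  Exp k.+1 f = Exp k (fun s => pnext k s * f (add_ball s)
                              + \sum_(i <- iota 1 k) qsel k s i * f (move_ball s i)).
Proof.
move=> k_gt0; rewrite /Exp law_succ // big_flatten /= big_map; apply: eq_bigr => x _.
rewrite /step big_cons big_map /= [RHS]mulrDr [in RHS]mulr_sumr mulrA; congr (_ + _).
by apply: eq_bigr => i _; rewrite mulrA.
Qed.

Lemma eq_Exp k f g : (forall x, x \in law k -> x.1 != 0 -> f x.2 = g x.2) ->
  Exp k f = Exp k g.
Proof.
move=> eq_fg; rewrite /Exp !big_seq; apply: eq_bigr => x law_x.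
by have [->|x1_neq0] := eqVneq x.1 0; rewrite ?mul0r // eq_fg.
Qed.

Lemma pnext_add_qsel k s : pnext k s + \sum_(i <- iota 1 k) qsel k s i = 1.
Proof.
suff -> : \sum_(i <- iota 1 k) qsel k s i =
    (1 - p) * (\sum_(1 <= i < k.+1) (i%:R + alpha) * (F s i)%:R) / denom k.
  by rewrite /pnext; ring.
rewrite mulr_sumr mulr_suml /index_iota subn1.
by apply: eq_bigr => i _; rewrite /qsel !mulrA.
Qed.

Lemma Exp1 {k} : (0 < k)%N -> Exp k (fun _ => 1) = 1.
Proof.
elim: k => // k IH _; have [->|k_gt0] := posnP k; first by rewrite /Exp big_seq1 mulr1.
rewrite Exp_succ // -[RHS](IH k_gt0); apply: eq_bigr => x _.
by under eq_bigr do rewrite mulr1; rewrite mulr1 pnext_add_qsel.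
Qed.

Lemma Exp_affine k a b f : (0 < k)%N ->
  Exp k (fun s => a + b * f s) = a + b * Exp k f.
Proof.
move=> k_gt0; rewrite -[a in RHS]mulr1 -(Exp1 k_gt0) /Exp !mulr_sumr -big_split.
by apply: eq_bigr => x _ /=; ring.
Qed.

Lemma qsel_eq0 k s i : F s i = 0%N -> qsel k s i = 0.
Proof. by rewrite /qsel => ->; rewrite mulr0 mul0r. Qed.

Lemma law_support {k x} : (0 < k)%N -> x \in law k -> x.1 != 0 ->
  (size x.2 <= k)%N /\ pins x.2 = k.
Proof.
elim: k x => // k IH x _; have [->|k_gt0] := posnP k; first by rewrite inE => /eqP ->.
rewrite law_succ // => /flattenP [_ /mapP [y law_y ->]].
rewrite /step in_cons => /orP [/eqP -> | /mapP [i iota_i ->]] /= x1_neq0;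
  have y1_neq0 : y.1 != 0 by apply: contraNneq x1_neq0 => ->; rewrite mul0r.
all: have [size_y pins_y] := IH y k_gt0 law_y y1_neq0.
  by rewrite size_add_ball // pins_add_ball pins_y.
have F_gt0 : (0 < F y.2 i)%N.
  by rewrite lt0n; apply: contraNneq x1_neq0 => /(qsel_eq0 k) ->; rewrite mulr0.
move: iota_i; rewrite mem_iota => /andP [i_gt0 i_le_k].
by rewrite size_move_ball // pins_move_ball // pins_y.
Qed.

Lemma selection_weight_window s N : (size s <= N)%N ->
  \sum_(1 <= i < N.+1) (i%:R + alpha) * (F s i)%:R = (pins s)%:R + alpha * (B s)%:R.
Proof.
move=> le_sN; rewrite -(sum_pins_window le_sN) -(sum_F_window le_sN) !natr_sum.
by rewrite mulr_sumr -big_split; apply: eq_bigr => i _; rewrite natrM mulrDl.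
Qed.

Lemma Exp_pnext k : (0 < k)%N ->
  Exp k (pnext k) = 1 - (1 - p) / denom k * (k%:R + alpha * Exp k (fun s => (B s)%:R)).
Proof.
move=> k_gt0; set c := (1 - p) / denom k.
rewrite (@eq_Exp _ _ (fun s => (1 - c * k%:R) + (- (c * alpha)) * (B s)%:R)).
  by rewrite Exp_affine //; ring.
move=> x law_x x1_neq0; have [size_x pins_x] := law_support k_gt0 law_x x1_neq0.
by rewrite /pnext selection_weight_window // pins_x /c; ring.
Qed.

Lemma Exp_B_succ k : (0 < k)%N ->
  Exp k.+1 (fun s => (B s)%:R) = Exp k (fun s => (B s)%:R) + Exp k (pnext k).
Proof.
move=> k_gt0; rewrite Exp_succ // /Exp -big_split; apply: eq_bigr => x _ /=.
rewrite B_add_ball (eq_bigr (fun i => qsel k x.2 i * (B x.2)%:R)); last first.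
  move=> i _; have [F_eq0|F_gt0] := posnP (F x.2 i).
    by rewrite qsel_eq0 // !mul0r.
  by rewrite B_move_ball.
rewrite -mulr_suml; have -> : \sum_(i <- iota 1 k) qsel k x.2 i = 1 - pnext k x.2.
  by rewrite -(pnext_add_qsel k x.2); ring.
by rewrite mulrSr; ring.
Qed.

End Expectation.

Section Moments.
Context {R : realFieldType} {p alpha : R}.
Hypotheses (p_ge0 : 0 <= p) (p_le1 : p <= 1) (alpha_gtN1 : -1 < alpha).

Local Notation Exp := (Exp p alpha).
Local Notation pnext := (pnext p alpha).
Local Notation EB k := (Exp k (fun s => (B s)%:R)).

Lemma denom_gt0 k : (0 < k)%N -> 0 < denom p alpha k.
Proof.
case: k => // m _.
have -> : denom p alpha m.+1 = m%:R * (1 - p) + (1 + alpha) * (1 + m%:R * p).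
  by rewrite /denom mulrSr; ring.
have mp_ge0 : 0 <= m%:R * p by apply: mulr_ge0.
apply: ltr_wpDl; first by rewrite mulr_ge0 ?subr_ge0.
apply: mulr_gt0; last by lra.
by move: alpha_gtN1; rewrite -subr_gt0 opprK addrC.
Qed.

Lemma Exp_pnext_eq_p k : (0 < k)%N -> EB k = 1 + k.-1%:R * p -> Exp k (pnext k) = p.
Proof.
move=> k_gt0 EBk; rewrite Exp_pnext // EBk.
have -> : k%:R + alpha * (1 + k.-1%:R * p) = denom p alpha k.
  by rewrite /denom -(prednK k_gt0) mulrSr; ring.
by rewrite mulfVK ?gt_eqF ?denom_gt0 //; ring.
Qed.

Lemma Exp_B k : (0 < k)%N -> EB k = 1 + k.-1%:R * p.
Proof.
elim: k => // k IH _; have [->|k_gt0] := posnP k.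
  by rewrite /Exp big_seq1 /B /= mul1r mul0r addr0.
rewrite Exp_B_succ // IH // Exp_pnext_eq_p ?IH // -(prednK k_gt0) mulrSr /=; ring.
Qed.

End Moments.

Theorem lemmaA1 (R : realFieldType) (p alpha : R)
  (hp0 : 0 < p) (hp1 : p < 1) (halpha : -1 < alpha)
  (hwd : well_defined p alpha) (k : nat) (hk : (1 < k)%N) :
  Exp p alpha k (fun s => (B s)%:R) = 1 + (k.-1)%:R * p /\
  Exp p alpha k (fun s => (\sum_(1 <= i < k.+1) F s i)%:R) = 1 + (k.-1)%:R * p /\
  Exp p alpha k.-1 (pnext p alpha k.-1) = p.
Proof.
have [p_ge0 p_le1] : 0 <= p /\ p <= 1 by split; apply: ltW.
have k_gt0 : (0 < k)%N by apply: ltnW.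
have k1_gt0 : (0 < k.-1)%N by rewrite -ltnS prednK.
have EB := Exp_B p_ge0 p_le1 halpha.
split; first exact: EB.
split; last exact: (Exp_pnext_eq_p p_ge0 p_le1 halpha _ k1_gt0 (EB _ k1_gt0)).
rewrite -EB //; apply: eq_Exp => x law_x x1_neq0.
by rewrite sum_F_window //; case: (law_support k_gt0 law_x x1_neq0).
Qed.
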